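(* Let $m_1,m_2,c_1,c_2,k_1,k_2>0$ and put $m=m_1+m_2$, $c=c_1+c_2$, $k=k_1+k_2$. Consider the switched system on $\mathbb{R}^4$ with state $x=(x_1,x_2,x_3,x_4)$, given by $E_{\sigma(t)}\dot x=A_{\sigma(t)}x$ with $\sigma(t)\in\{1,2\}$ and $$E_1=\mathrm{diag}(1,m_1,1,m_2),\quad A_1=\begin{bmatrix}0&1&0&0\\-k_1&-c_1&0&0\\0&0&0&1\\0&0&-k_2&-c_2\end{bmatrix},\quad E_2=\mathrm{diag}(1,m,1,0),\quad A_2=\begin{bmatrix}0&1&0&0\\-k&-c&0&0\\0&0&0&1\\-1&0&1&0\end{bmatrix},$$ with the following switching rules: a switch from mode 2 to mode 1 may occur at any time and then $x(t_*^+)=x(t_*^-)$; a switch from mode 1 to mode 2 at time $t_*$ may occur only if $x_1(t_*^-)=x_3(t_*^-)$, and then $x_1(t_*^+)=x_3(t_*^+)=x_1(t_*^-)$ and $x_2(t_*^+)=x_4(t_*^+)=\frac{m_1x_2(t_*^-)+m_2x_4(t_*^-)}{m}$. Then this switched system is globally uniformly exponentially stable about zero.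
   Context: This models two spring–mass–damper systems (masses $m_1,m_2$, damping $c_1,c_2$, stiffness $k_1,k_2$, displacements $x_1=q_1$, $x_3=q_2$, velocities $x_2,x_4$) that may lock together (mode 2) with conservation of momentum at lock-up, or move independently (mode 1). Switched descriptor system: the switching signal $\sigma$ is piecewise constant with finitely many discontinuities in every bounded interval; a solution $x(\cdot)$ is differentiable and satisfies $E_{\sigma(t)}\dot x(t)=A_{\sigma(t)}x(t)$ at every $t$ where $\sigma$ is continuous, with one-sided limits $x(t_*^\pm)$ at discontinuities of $\sigma$, where the stated switching rules hold (the differential equation is not required at switching instants). GUES means there exist $\beta,\alpha>0$ such that every solution satisfies $\|x(t)\|\le\beta e^{-\alpha(t-t_0)}\|x(t_0)\|$ for all $t\ge t_0$. *)

From Stdlib Require Import Reals Lra.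
Open Scope R_scope.

Inductive mode := M1 | M2.

(* States in R^4: functions nat -> R, only indices 0..3 are used
   (index 0,1,2,3 = paper's x1,x2,x3,x4). Matrices: nat -> nat -> R. *)
Definition vec := nat -> R.
Definition mat := nat -> nat -> R.

Definition mv (A : mat) (v : vec) (i : nat) : R :=
  sum_f_R0 (fun j => A i j * v j) 3.

Definition vnorm (v : vec) : R := sqrt (sum_f_R0 (fun j => (v j)^2) 3).

Record params := mkParams { m1 : R; m2 : R; c1 : R; c2 : R; k1 : R; k2 : R }.

Definition Emat (p : params) (s : mode) : mat :=
  fun i j =>
  match s with
  | M1 => match i, j with
          | 0%nat, 0%nat => 1 | 1%nat, 1%nat => m1 p
          | 2%nat, 2%nat => 1 | 3%nat, 3%nat => m2 p | _, _ => 0 end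
  | M2 => match i, j with
          | 0%nat, 0%nat => 1 | 1%nat, 1%nat => m1 p + m2 p
          | 2%nat, 2%nat => 1 | _, _ => 0 end
  end.

Definition Amat (p : params) (s : mode) : mat :=
  fun i j =>
  match s with
  | M1 => match i, j with
          | 0%nat, 1%nat => 1
          | 1%nat, 0%nat => - k1 p | 1%nat, 1%nat => - c1 p
          | 2%nat, 3%nat => 1
          | 3%nat, 2%nat => - k2 p | 3%nat, 3%nat => - c2 p
          | _, _ => 0 end
  | M2 => match i, j with
          | 0%nat, 1%nat => 1
          | 1%nat, 0%nat => - (k1 p + k2 p) | 1%nat, 1%nat => - (c1 p + c2 p)
          | 2%nat, 3%nat => 1
          | 3%nat, 0%nat => -1 | 3%nat, 2%nat => 1
          | _, _ => 0 end
  end.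

(* sigma is continuous (= locally constant, mode being discrete) at t *)
Definition sig_cont_at (sigma : R -> mode) (t : R) : Prop :=
  exists d, 0 < d /\ forall s, Rabs (s - t) < d -> sigma s = sigma t.

Definition piecewise_constant (sigma : R -> mode) : Prop :=
  forall a b, exists l : list R,
    forall t, a <= t <= b -> ~ List.In t l -> sig_cont_at sigma t.

Definition left_lim (f : R -> R) (t l : R) : Prop :=
  forall eps, 0 < eps -> exists d, 0 < d /\
    forall s, t - d < s < t -> Rabs (f s - l) < eps.
Definition right_lim (f : R -> R) (t l : R) : Prop :=
  forall eps, 0 < eps -> exists d, 0 < d /\
    forall s, t < s < t + d -> Rabs (f s - l) < eps.

(* switching rules at a discontinuity t of sigma, with left mode i,
   right mode j, left limit xm and right limit xp *)
Definition switch_rule (p : params) (i j : mode) (xm xp : vec) : Prop :=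
  match i, j with
  | M1, M2 => xm 0%nat = xm 2%nat /\
              xp 0%nat = xm 0%nat /\ xp 2%nat = xm 0%nat /\
              xp 1%nat = (m1 p * xm 1%nat + m2 p * xm 3%nat) / (m1 p + m2 p) /\
              xp 3%nat = (m1 p * xm 1%nat + m2 p * xm 3%nat) / (m1 p + m2 p)
  | _, _ => forall k, (k < 4)%nat -> xp k = xm k
  end.

(* x : R -> vec is a solution on [t0, +oo) for the switching signal sigma.
   Convention: x is right-continuous (x(t) = x(t^+)) at t0 and at switching instants. *)
Definition is_solution (p : params) (sigma : R -> mode) (t0 : R) (x : R -> vec) : Prop :=
  (forall k, (k < 4)%nat -> right_lim (fun s => x s k) t0 (x t0 k)) /\
  (forall t, t0 < t -> sig_cont_at sigma t ->
     exists dx : vec,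
       (forall k, (k < 4)%nat -> derivable_pt_lim (fun s => x s k) t (dx k)) /\
       (forall i, (i < 4)%nat ->
          mv (Emat p (sigma t)) dx i = mv (Amat p (sigma t)) (x t) i)) /\
  (forall t, t0 < t -> ~ sig_cont_at sigma t ->
     exists (d : R) (i j : mode) (xm : vec),
       0 < d /\
       (forall s, t - d < s < t -> sigma s = i) /\
       (forall s, t < s < t + d -> sigma s = j) /\
       (forall k, (k < 4)%nat -> left_lim (fun s => x s k) t (xm k)) /\
       (forall k, (k < 4)%nat -> right_lim (fun s => x s k) t (x t k)) /\
       switch_rule p i j xm (x t)).

Definition GUES (p : params) : Prop :=
  exists beta alpha, 0 < beta /\ 0 < alpha /\
    forall sigma, piecewise_constant sigma ->
    forall t0 (x : R -> vec), is_solution p sigma t0 x ->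
    forall t, t0 <= t -> vnorm (x t) <= beta * exp (- alpha * (t - t0)) * vnorm (x t0).

(* Each body carries the Lyapunov function K q^2 + M v^2 + 2 e M q v (twice its energy plus
   a small cross term); for e small compared with the damping it decays at rate e/2 along the
   free motion.  Their sum V serves both modes: in mode 2 the bodies share position and velocity,
   and the sum is the function of the merged body with mass m, damping c and stiffness k, which
   decays likewise.  At a lock-up the positions agree and momentum is conserved, so the cross
   terms are unchanged and the kinetic energy can only drop; releasing the lock changes nothing.
   Hence exp(e t / 2) V(x t) is nonincreasing across flows and switches, and since V is
   comparable with |x|^2 the state decays exponentially at rate e/4. *)

From Stdlib Require Import Reals Lra Lia Psatz List Classical.
From Coquelicot Require Import Coquelicot.
Open Scope R_scope.

Lemma filterlim_Rplus {T} (F : (T -> Prop) -> Prop) {FF : Filter F} (f g : T -> R) a b :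
  filterlim f F (locally a) -> filterlim g F (locally b) ->
  filterlim (fun s => f s + g s) F (locally (a + b)).
Proof. intros Hf Hg; exact (filterlim_comp_2 f g Rplus Hf Hg (filterlim_plus a b)). Qed.

Lemma filterlim_Rmult {T} (F : (T -> Prop) -> Prop) {FF : Filter F} (f g : T -> R) a b :
  filterlim f F (locally a) -> filterlim g F (locally b) ->
  filterlim (fun s => f s * g s) F (locally (a * b)).
Proof. intros Hf Hg; exact (filterlim_comp_2 f g Rmult Hf Hg (filterlim_mult a b)). Qed.

Lemma ball_interval (x y : R) (e : posreal) : ball x e y -> x - e < y < x + e.
Proof. intros H; change (Rabs (y - x) < e) in H; apply Rabs_def2 in H; lra. Qed.

Lemma right_lim_filterlim f t l : right_lim f t l -> filterlim f (at_right t) (locally l).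
Proof.
  intros Hf P [eps HP].
  destruct (Hf eps (cond_pos eps)) as [d [Hd Hclose]].
  exists (mkposreal d Hd); intros s Hs Hts; apply HP.
  apply ball_interval in Hs; simpl in Hs; apply Hclose; lra.
Qed.

Lemma left_lim_filterlim f t l : left_lim f t l -> filterlim f (at_left t) (locally l).
Proof.
  intros Hf P [eps HP].
  destruct (Hf eps (cond_pos eps)) as [d [Hd Hclose]].
  exists (mkposreal d Hd); intros s Hs Hst; apply HP.
  apply ball_interval in Hs; simpl in Hs; apply Hclose; lra.
Qed.

Lemma continuity_at_right f t : continuity_pt f t -> filterlim f (at_right t) (locally (f t)).
Proof.
  intros Hf; apply continuity_pt_filterlim in Hf.
  apply (filterlim_filter_le_1 _ (F := locally t)); [|exact Hf].
  intros P [eps HP]; exists eps; auto.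
Qed.

Lemma continuity_at_left f t : continuity_pt f t -> filterlim f (at_left t) (locally (f t)).
Proof.
  intros Hf; apply continuity_pt_filterlim in Hf.
  apply (filterlim_filter_le_1 _ (F := locally t)); [|exact Hf].
  intros P [eps HP]; exists eps; auto.
Qed.

Lemma nonincreasing_of_derive_nonpos f s t :
  (forall u, s < u < t -> exists df, derivable_pt_lim f u df /\ df <= 0) ->
  forall a b, s < a -> a < b -> b < t -> f b <= f a.
Proof.
  intros Hd a b Hsa Hab Hbt.
  assert (Hder : forall u, a <= u <= b -> is_derive f u (Derive f u)).
  { intros u Hu; destruct (Hd u) as [df [Hdf _]]; [lra|].
    apply is_derive_Reals in Hdf; rewrite (is_derive_unique _ _ _ Hdf); exact Hdf. }
  destruct (MVT_gen f a b (Derive f)) as [c [Hc Hmvt]].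
  all: rewrite ?Rmin_left, ?Rmax_right in * by lra.
  - intros u Hu; apply Hder; lra.
  - intros u Hu; apply derivable_continuous_pt; exists (Derive f u).
    apply is_derive_Reals, Hder; lra.
  - destruct (Hd c) as [df [Hdf Hneg]]; [lra|].
    apply is_derive_Reals, is_derive_unique in Hdf; rewrite Hdf in Hmvt; nra.
Qed.

Section PiecewiseMonotone.

Variables (f : R -> R) (t0 : R).
Hypothesis f_right_cont : forall u, t0 <= u -> filterlim f (at_right u) (locally (f u)).
Hypothesis f_jumps_down : forall u, t0 < u ->
  exists L, filterlim f (at_left u) (locally L) /\ f u <= L.

Lemma le_of_nonincreasing_open s t : t0 <= s -> s < t ->
  (forall a b, s < a -> a < b -> b < t -> f b <= f a) -> f t <= f s.
Proof.
  intros Hs Hst Hmono.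
  assert (Hinner : forall a, s < a < t -> f t <= f a).
  { intros a Ha; destruct (f_jumps_down t) as [L [HL HtL]]; [lra|].
    enough (L <= f a) by lra.
    apply (closed_filterlim_loc f (fun y => y <= f a) L HL); [|apply closed_le].
    exists (mkposreal (t - a) ltac:(lra)); intros b Hb Hbt.
    apply ball_interval in Hb; simpl in Hb; apply Hmono; lra. }
  apply (closed_filterlim_loc f (fun y => f t <= y) (f s) (f_right_cont s Hs));
    [|apply closed_ge].
  exists (mkposreal (t - s) ltac:(lra)); intros a Ha Hsa.
  apply ball_interval in Ha; simpl in Ha; apply Hinner; lra.
Qed.

Lemma nonincreasing_piecewise (C : R -> Prop) :
  (forall u, t0 < u -> C u -> exists df, derivable_pt_lim f u df /\ df <= 0) ->
  forall (l : list R) s t, t0 <= s -> s < t ->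
  (forall u, s < u < t -> ~ In u l -> C u) -> f t <= f s.
Proof.
  intros Hd l; induction l as [|p l IH]; intros s t Hs Hst HC.
  - apply le_of_nonincreasing_open; auto.
    apply (nonincreasing_of_derive_nonpos f s t); intros u Hu.
    apply Hd; [lra|]; apply HC; auto.
  - assert (Hskip : forall a b, s <= a -> b <= t -> ~ (a < p < b) ->
              forall u, a < u < b -> ~ In u l -> C u).
    { intros a b Ha Hb Hp u Hu Hl; apply HC; [lra|].
      intros [->|Hin]; [apply Hp; lra|auto]. }
    destruct (Rlt_dec s p) as [Hsp|Hsp]; [destruct (Rlt_dec p t) as [Hpt|Hpt]|].
    + apply Rle_trans with (f p); apply IH; try lra; apply Hskip; lra.
    + apply IH; auto; apply Hskip; lra.
    + apply IH; auto; apply Hskip; lra.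
Qed.

End PiecewiseMonotone.

Definition lyap (M K e q v : R) : R := K * (q * q) + M * (v * v) + 2 * e * (M * (q * v)).

Definition lyap_deriv (M K e q v dq dv : R) : R :=
  2 * (K * q * dq + M * v * dv + e * (M * (dq * v + q * dv))).

Definition admissible_rate (M C K e : R) : Prop := 2 * e * M <= C /\ 2 * e * C <= K.

Lemma lyap_add M M' K K' e q v :
  lyap M K e q v + lyap M' K' e q v = lyap (M + M') (K + K') e q v.
Proof. unfold lyap; ring. Qed.

Lemma lyap_deriv_add M M' K K' e q v dq dv :
  lyap_deriv M K e q v dq dv + lyap_deriv M' K' e q v dq dv =
  lyap_deriv (M + M') (K + K') e q v dq dv.
Proof. unfold lyap_deriv; ring. Qed.

Lemma admissible_rate_exists M C K : 0 < M -> 0 < C -> 0 < K ->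
  exists b, 0 < b /\ forall e, 0 < e <= b -> admissible_rate M C K e.
Proof.
  intros HM HC HK; exists (Rmin (C / (2 * M)) (K / (2 * C))); split.
  - apply Rmin_pos; apply Rdiv_lt_0_compat; lra.
  - intros e [He Heb].
    pose proof (Rmin_l (C / (2 * M)) (K / (2 * C))) as H1.
    pose proof (Rmin_r (C / (2 * M)) (K / (2 * C))) as H2.
    split.
    + apply (Rmult_le_reg_r (/ (2 * M))); [apply Rinv_0_lt_compat; lra|].
      replace (2 * e * M * / (2 * M)) with e by (field; lra); unfold Rdiv in H1; lra.
    + apply (Rmult_le_reg_r (/ (2 * C))); [apply Rinv_0_lt_compat; lra|].
      replace (2 * e * C * / (2 * C)) with e by (field; lra); unfold Rdiv in H2; lra.
Qed.

Section Oscillator.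

Variables (M C K e : R).
Hypotheses (HM : 0 < M) (HC : 0 < C) (HK : 0 < K) (He : 0 < e).
Hypothesis Hrate : admissible_rate M C K e.

Lemma lyap_cross_bound q v :
  - (/2 * (K * (q * q) + M * (v * v))) <= 2 * e * (M * (q * v)) <= /2 * (K * (q * q) + M * (v * v)).
Proof.
  destruct Hrate as [H1 H2].
  (* the product of the two rate conditions *)
  assert (Hsq : 4 * (e * e) * M <= K) by nra.
  assert (Hpos : 0 <= M * (K - 4 * (e * e) * M) * (v * v)).
  { apply Rmult_le_pos; [apply Rmult_le_pos|]; nra. }
  split; apply (Rmult_le_reg_l (4 * K)); try lra.
  - pose proof (pow2_ge_0 (K * q + 2 * e * M * v)); nra.
  - pose proof (pow2_ge_0 (K * q - 2 * e * M * v)); nra.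
Qed.

Lemma lyap_bounds lo hi q v : lo <= K -> lo <= M -> K <= hi -> M <= hi ->
  lo / 2 * (q * q + v * v) <= lyap M K e q v <= 3 * hi / 2 * (q * q + v * v).
Proof.
  intros Hlo1 Hlo2 Hhi1 Hhi2; unfold lyap.
  pose proof (lyap_cross_bound q v) as Hc.
  pose proof (Rle_0_sqr q); pose proof (Rle_0_sqr v); unfold Rsqr in *.
  split; nra.
Qed.

Lemma lyap_dissipation q v dv : M * dv = - K * q - C * v ->
  lyap_deriv M K e q v v dv <= - (e / 2) * lyap M K e q v.
Proof.
  intros Hdv; destruct Hrate as [H1 H2].
  replace (lyap_deriv M K e q v v dv)
    with (2 * (K * q * v + v * (M * dv) + e * (M * (v * v) + q * (M * dv))))
    by (unfold lyap_deriv; ring).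
  rewrite Hdv; unfold lyap.
  (* what remains is the nonnegativity of the quadratic form A v^2 + B q^2 + D q v *)
  set (A := C - 5 / 4 * e * M); set (B := 3 / 4 * e * K); set (D := e * C - e * e * M / 2).
  assert (HA : 3 / 8 * C <= A) by (unfold A; lra).
  assert (HD : 0 <= D <= e * C) by (unfold D; split; nra).
  assert (HAB : D * D <= 4 * A * B).
  { apply Rle_trans with ((e * C) * (e * C)); [nra|].
    apply Rle_trans with (e * C * (K / 2)); [nra|].
    assert (0 <= e * K) by nra; unfold B; nra. }
  assert (0 <= A * (v * v) + B * (q * q) + D * (q * v)).
  { apply (Rmult_le_reg_l (4 * A)); [lra|].
    pose proof (pow2_ge_0 (2 * A * v + D * q)).
    pose proof (Rle_0_sqr q); unfold Rsqr in *; nra. }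
  unfold A, B, D in *; nra.
Qed.

End Oscillator.

Lemma lyap_derivable M K e (q v : R -> R) u dq dv :
  derivable_pt_lim q u dq -> derivable_pt_lim v u dv ->
  derivable_pt_lim (fun s => lyap M K e (q s) (v s)) u (lyap_deriv M K e (q u) (v u) dq dv).
Proof.
  intros Hq Hv; apply is_derive_Reals in Hq, Hv; apply is_derive_Reals.
  unfold lyap, lyap_deriv; auto_derive.
  - repeat split; first [exists dq; exact Hq | exists dv; exact Hv].
  - change (Derive (fun s => q s) u) with (Derive q u).
    change (Derive (fun s => v s) u) with (Derive v u).
    rewrite (is_derive_unique _ _ _ Hq), (is_derive_unique _ _ _ Hv); ring.
Qed.

Lemma kinetic_energy_inelastic (M M' a b v : R) : 0 < M -> 0 < M' ->
  (M + M') * v = M * a + M' * b -> (M + M') * (v * v) <= M * (a * a) + M' * (b * b).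
Proof.
  intros HM HM' Hv; apply (Rmult_le_reg_l (M + M')); [lra|].
  replace ((M + M') * ((M + M') * (v * v))) with (((M + M') * v) * ((M + M') * v)) by ring.
  rewrite Hv.
  assert (0 <= M * M' * ((a - b) * (a - b))) by (apply Rmult_le_pos; [nra|apply Rle_0_sqr]).
  replace ((M + M') * (M * (a * a) + M' * (b * b)))
    with ((M * a + M' * b) * (M * a + M' * b) + M * M' * ((a - b) * (a - b))) by ring.
  lra.
Qed.

Lemma derivable_pt_lim_locally_zero g u l :
  locally u (fun s => g s = 0) -> derivable_pt_lim g u l -> l = 0.
Proof.
  intros Hz Hg; apply is_derive_Reals in Hg.
  apply (is_derive_ext_loc g (fun _ => 0)) in Hg; [|exact Hz].
  rewrite <- (is_derive_unique _ _ _ Hg); apply Derive_const.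
Qed.

Lemma sig_cont_at_locally sigma t :
  sig_cont_at sigma t <-> locally t (fun s => sigma s = sigma t).
Proof.
  split.
  - intros [d [Hd Hs]]; exists (mkposreal d Hd); intros s Hb; apply Hs, Hb.
  - intros [d Hs]; exists d; split; [apply cond_pos|]; intros s Hb; apply Hs, Hb.
Qed.

Lemma exp_weight_derivable a t0 u :
  derivable_pt_lim (fun s => exp (a * (s - t0))) u (a * exp (a * (u - t0))).
Proof. apply is_derive_Reals; auto_derive; [exact I|unfold Rminus; ring]. Qed.

Definition sqnorm (y : vec) : R := sum_f_R0 (fun j => y j ^ 2) 3.

Definition sys_lyap (p : params) (e : R) (y : vec) : R :=
  lyap (m1 p) (k1 p) e (y 0%nat) (y 1%nat) + lyap (m2 p) (k2 p) e (y 2%nat) (y 3%nat).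

Definition sys_lyap_deriv (p : params) (e : R) (y dy : vec) : R :=
  lyap_deriv (m1 p) (k1 p) e (y 0%nat) (y 1%nat) (dy 0%nat) (dy 1%nat)
  + lyap_deriv (m2 p) (k2 p) e (y 2%nat) (y 3%nat) (dy 2%nat) (dy 3%nat).

Definition admissible_sys_rate (p : params) (e : R) : Prop :=
  admissible_rate (m1 p) (c1 p) (k1 p) e /\ admissible_rate (m2 p) (c2 p) (k2 p) e /\
  admissible_rate (m1 p + m2 p) (c1 p + c2 p) (k1 p + k2 p) e.

Lemma mode1_dynamics p (dx y : vec) :
  (forall i, (i < 4)%nat -> mv (Emat p M1) dx i = mv (Amat p M1) y i) ->
  dx 0%nat = y 1%nat /\ m1 p * dx 1%nat = - k1 p * y 0%nat - c1 p * y 1%nat /\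
  dx 2%nat = y 3%nat /\ m2 p * dx 3%nat = - k2 p * y 2%nat - c2 p * y 3%nat.
Proof.
  intros H; pose proof (H 0%nat ltac:(lia)); pose proof (H 1%nat ltac:(lia));
    pose proof (H 2%nat ltac:(lia)); pose proof (H 3%nat ltac:(lia)).
  unfold mv, Emat, Amat in *; simpl in *; repeat split; lra.
Qed.

Lemma mode2_dynamics p (dx y : vec) :
  (forall i, (i < 4)%nat -> mv (Emat p M2) dx i = mv (Amat p M2) y i) ->
  dx 0%nat = y 1%nat /\
  (m1 p + m2 p) * dx 1%nat = - (k1 p + k2 p) * y 0%nat - (c1 p + c2 p) * y 1%nat /\
  dx 2%nat = y 3%nat /\ y 0%nat = y 2%nat.
Proof.
  intros H; pose proof (H 0%nat ltac:(lia)); pose proof (H 1%nat ltac:(lia));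
    pose proof (H 2%nat ltac:(lia)); pose proof (H 3%nat ltac:(lia)).
  unfold mv, Emat, Amat in *; simpl in *; repeat split; lra.
Qed.

Lemma sys_lyap_derivable p e (x : R -> vec) u (dx : vec) :
  (forall k, (k < 4)%nat -> derivable_pt_lim (fun s => x s k) u (dx k)) ->
  derivable_pt_lim (fun s => sys_lyap p e (x s)) u (sys_lyap_deriv p e (x u) dx).
Proof.
  intros Hx; apply (derivable_pt_lim_plus (fun s => lyap _ _ e (x s 0%nat) (x s 1%nat))
                                          (fun s => lyap _ _ e (x s 2%nat) (x s 3%nat)));
    apply lyap_derivable; apply Hx; lia.
Qed.

Lemma filterlim_sys_lyap p e {T} (F : (T -> Prop) -> Prop) {FF : Filter F} (x : T -> vec) y :
  (forall k, (k < 4)%nat -> filterlim (fun s => x s k) F (locally (y k))) ->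
  filterlim (fun s => sys_lyap p e (x s)) F (locally (sys_lyap p e y)).
Proof.
  intros Hx; unfold sys_lyap, lyap.
  repeat first [ apply filterlim_Rplus | apply filterlim_Rmult
               | apply filterlim_const | apply Hx; lia | exact FF ].
Qed.

Section System.

Variable p : params.
Hypotheses (Hm1 : 0 < m1 p) (Hm2 : 0 < m2 p) (Hc1 : 0 < c1 p) (Hc2 : 0 < c2 p)
           (Hk1 : 0 < k1 p) (Hk2 : 0 < k2 p).

Lemma admissible_sys_rate_exists : exists e, 0 < e /\ admissible_sys_rate p e.
Proof.
  destruct (admissible_rate_exists (m1 p) (c1 p) (k1 p)) as [b1 [Hb1 G1]]; try lra.
  destruct (admissible_rate_exists (m2 p) (c2 p) (k2 p)) as [b2 [Hb2 G2]]; try lra.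
  destruct (admissible_rate_exists (m1 p + m2 p) (c1 p + c2 p) (k1 p + k2 p))
    as [b3 [Hb3 G3]]; try lra.
  exists (Rmin b1 (Rmin b2 b3)).
  pose proof (Rmin_l b1 (Rmin b2 b3)); pose proof (Rmin_r b1 (Rmin b2 b3));
    pose proof (Rmin_l b2 b3); pose proof (Rmin_r b2 b3).
  assert (Hpos : 0 < Rmin b1 (Rmin b2 b3)) by (repeat apply Rmin_pos; lra).
  split; [|split; [|split]]; [lra|apply G1|apply G2|apply G3]; lra.
Qed.

Variable e : R.
Hypotheses (He : 0 < e) (Hrate : admissible_sys_rate p e).

Lemma sys_lyap_bounds lo hi y :
  lo <= k1 p -> lo <= k2 p -> lo <= m1 p -> lo <= m2 p ->
  k1 p <= hi -> k2 p <= hi -> m1 p <= hi -> m2 p <= hi ->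
  lo / 2 * sqnorm y <= sys_lyap p e y <= 3 * hi / 2 * sqnorm y.
Proof.
  intros; destruct Hrate as [R1 [R2 _]].
  pose proof (lyap_bounds _ _ _ _ Hm1 Hk1 He R1 lo hi (y 0%nat) (y 1%nat)).
  pose proof (lyap_bounds _ _ _ _ Hm2 Hk2 He R2 lo hi (y 2%nat) (y 3%nat)).
  replace (sqnorm y) with ((y 0%nat * y 0%nat + y 1%nat * y 1%nat)
                           + (y 2%nat * y 2%nat + y 3%nat * y 3%nat))
    by (unfold sqnorm; simpl; ring).
  unfold sys_lyap; lra.
Qed.

Lemma sys_lyap_switch i j xm xp :
  switch_rule p i j xm xp -> sys_lyap p e xp <= sys_lyap p e xm.
Proof.
  unfold sys_lyap; destruct i, j; simpl;
    try (intros Hs; rewrite !Hs by lia; lra).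
  intros [E02 [E0 [E2 [E1 E3]]]]; rewrite E0, E2, E1, E3, <- E02.
  set (v := (m1 p * xm 1%nat + m2 p * xm 3%nat) / (m1 p + m2 p)).
  assert (Hv : (m1 p + m2 p) * v = m1 p * xm 1%nat + m2 p * xm 3%nat)
    by (unfold v; field; lra).
  pose proof (kinetic_energy_inelastic _ _ _ _ _ Hm1 Hm2 Hv).
  assert (Hcross : 2 * e * (m1 p * (xm 0%nat * v)) + 2 * e * (m2 p * (xm 0%nat * v))
                  = 2 * e * (m1 p * (xm 0%nat * xm 1%nat))
                    + 2 * e * (m2 p * (xm 0%nat * xm 3%nat))).
  { transitivity (2 * e * xm 0%nat * ((m1 p + m2 p) * v)); [ring|rewrite Hv; ring]. }
  unfold lyap; lra.
Qed.

Section Solution.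

Variables (sigma : R -> mode) (t0 : R) (x : R -> vec).
Hypothesis Hpc : piecewise_constant sigma.
Hypothesis Hsol : is_solution p sigma t0 x.

Lemma solution_right_cont u k : t0 <= u -> (k < 4)%nat ->
  filterlim (fun s => x s k) (at_right u) (locally (x u k)).
Proof.
  intros Hu Hk; destruct Hsol as [Hinit [Hsmooth Hjump]].
  destruct (Req_dec u t0) as [->|Hne]; [apply right_lim_filterlim, Hinit, Hk|].
  destruct (classic (sig_cont_at sigma u)) as [Hc|Hc].
  - destruct (Hsmooth u ltac:(lra) Hc) as [dx [Hdx _]].
    apply continuity_at_right, derivable_continuous_pt; exists (dx k); apply Hdx, Hk.
  - destruct (Hjump u ltac:(lra) Hc) as [d [i [j [xm [_ [_ [_ [_ [Hr _]]]]]]]]].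
    apply right_lim_filterlim, Hr, Hk.
Qed.

Lemma solution_left_lim u : t0 < u ->
  exists xm, (forall k, (k < 4)%nat -> filterlim (fun s => x s k) (at_left u) (locally (xm k)))
             /\ sys_lyap p e (x u) <= sys_lyap p e xm.
Proof.
  intros Hu; destruct Hsol as [_ [Hsmooth Hjump]].
  destruct (classic (sig_cont_at sigma u)) as [Hc|Hc].
  - exists (x u); split; [intros k Hk|lra].
    destruct (Hsmooth u Hu Hc) as [dx [Hdx _]].
    apply continuity_at_left, derivable_continuous_pt; exists (dx k); apply Hdx, Hk.
  - destruct (Hjump u Hu Hc) as [d [i [j [xm [_ [_ [_ [Hl [_ Hsw]]]]]]]]].
    exists xm; split; [intros k Hk; apply left_lim_filterlim, Hl, Hk|].
    apply (sys_lyap_switch i j), Hsw.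
Qed.

Lemma solution_mode_locally u : t0 < u -> sig_cont_at sigma u ->
  locally u (fun s => t0 < s /\ sig_cont_at sigma s /\ sigma s = sigma u).
Proof.
  intros Hu Hc; apply sig_cont_at_locally in Hc.
  generalize (filter_and _ _ (open_gt t0 u Hu) (filter_and _ _ (locally_locally _ _ Hc) Hc)).
  apply filter_imp; intros s [Hs [Hloc Heq]]; repeat split; auto.
  apply sig_cont_at_locally; rewrite Heq; exact Hloc.
Qed.

(* In mode 2 only the positions are constrained algebraically; equal velocities follow by
   differentiating [x1 = x3] on a neighbourhood. *)
Lemma solution_locked_velocities u : t0 < u -> sig_cont_at sigma u -> sigma u = M2 ->
  locally u (fun s => x s 1%nat = x s 3%nat).
Proof.
  intros Hu Hc H2.
  assert (Hdae : forall s, t0 < s -> sig_cont_at sigma s -> sigma s = M2 ->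
            x s 0%nat = x s 2%nat /\
            exists dx, (forall k, (k < 4)%nat -> derivable_pt_lim (fun s' => x s' k) s (dx k))
                       /\ dx 0%nat = x s 1%nat /\ dx 2%nat = x s 3%nat).
  { intros s Hs Hcs Hm; destruct Hsol as [_ [Hsmooth _]].
    destruct (Hsmooth s Hs Hcs) as [dx [Hdx Heq]]; rewrite Hm in Heq.
    destruct (mode2_dynamics p dx (x s) Heq) as [E0 [_ [E2 E02]]].
    split; [exact E02|exists dx; auto]. }
  pose proof (solution_mode_locally u Hu Hc) as Hloc; rewrite H2 in Hloc.
  assert (Hpos : locally u (fun s => x s 0%nat - x s 2%nat = 0)).
  { revert Hloc; apply filter_imp; intros s [Hs [Hcs Hm]].
    destruct (Hdae s Hs Hcs Hm) as [E _]; lra. }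
  generalize (filter_and _ _ Hloc (locally_locally _ _ Hpos)); apply filter_imp.
  intros s [[Hs [Hcs Hm]] Hz].
  destruct (Hdae s Hs Hcs Hm) as [_ [dx [Hdx [E0 E2]]]].
  assert (dx 0%nat - dx 2%nat = 0); [|lra].
  apply (derivable_pt_lim_locally_zero (fun s' => x s' 0%nat - x s' 2%nat) s); [exact Hz|].
  apply (derivable_pt_lim_minus (fun s' => x s' 0%nat) (fun s' => x s' 2%nat)); apply Hdx; lia.
Qed.

Lemma sys_lyap_dissipation u : t0 < u -> sig_cont_at sigma u ->
  exists dW, derivable_pt_lim (fun s => sys_lyap p e (x s)) u dW
             /\ dW <= - (e / 2) * sys_lyap p e (x u).
Proof.
  intros Hu Hc; destruct Hrate as [R1 [R2 R12]].
  destruct Hsol as [_ [Hsmooth _]].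
  destruct (Hsmooth u Hu Hc) as [dx [Hdx Heq]].
  exists (sys_lyap_deriv p e (x u) dx); split; [apply sys_lyap_derivable, Hdx|].
  unfold sys_lyap_deriv, sys_lyap.
  destruct (sigma u) eqn:Hmode.
  - destruct (mode1_dynamics p dx (x u) Heq) as [E0 [E1 [E2 E3]]]; rewrite E0, E2.
    pose proof (lyap_dissipation _ _ _ _ Hm1 Hc1 He R1 _ _ _ E1).
    pose proof (lyap_dissipation _ _ _ _ Hm2 Hc2 He R2 _ _ _ E3).
    lra.
  - destruct (mode2_dynamics p dx (x u) Heq) as [E0 [E1 [E2 E02]]].
    pose proof (solution_locked_velocities u Hu Hc Hmode) as H13.
    assert (D13 : dx 1%nat - dx 3%nat = 0).
    { apply (derivable_pt_lim_locally_zero (fun s => x s 1%nat - x s 3%nat) u).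
      - revert H13; apply filter_imp; intros s Hs; lra.
      - apply (derivable_pt_lim_minus (fun s => x s 1%nat) (fun s => x s 3%nat));
          apply Hdx; lia. }
    apply locally_singleton in H13.
    rewrite E0, E2, <- E02, <- H13; replace (dx 3%nat) with (dx 1%nat) by lra.
    rewrite lyap_add, lyap_deriv_add.
    pose proof (lyap_dissipation _ _ _ _ (Rplus_lt_0_compat _ _ Hm1 Hm2)
                  (Rplus_lt_0_compat _ _ Hc1 Hc2) He R12 _ _ _ E1).
    lra.
Qed.

Lemma sys_lyap_decay t : t0 <= t ->
  sys_lyap p e (x t) <= exp (- (e / 2) * (t - t0)) * sys_lyap p e (x t0).
Proof.
  intros Ht.
  set (w s := exp (e / 2 * (s - t0))).
  assert (Hw : forall u, continuity_pt w u).
  { intros u; apply derivable_continuous_pt; eexists; apply exp_weight_derivable. }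
  set (F s := w s * sys_lyap p e (x s)).
  assert (HF : F t <= F t0).
  { destruct (Req_dec t t0) as [->|Hne]; [lra|].
    destruct (Hpc t0 t) as [l Hl].
    apply (nonincreasing_piecewise F t0) with (sig_cont_at sigma) l; try lra.
    - intros u Hu; refine (filterlim_Rmult _ _ _ _ _ _ _); [apply continuity_at_right, Hw|].
      refine (filterlim_sys_lyap _ _ _ _ _ _); intros k Hk; apply solution_right_cont; auto.
    - intros u Hu; destruct (solution_left_lim u Hu) as [xm [Hxm Hle]].
      exists (w u * sys_lyap p e xm); split.
      + refine (filterlim_Rmult _ _ _ _ _ _ _); [apply continuity_at_left, Hw|].
        refine (filterlim_sys_lyap _ _ _ _ _ Hxm).
      + apply Rmult_le_compat_l; [left; apply exp_pos|exact Hle].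
    - intros u Hu Hc; destruct (sys_lyap_dissipation u Hu Hc) as [dW [HdW Hle]].
      eexists; split.
      + apply (derivable_pt_lim_mult w (fun s => sys_lyap p e (x s)));
          [apply exp_weight_derivable|exact HdW].
      + pose proof (exp_pos (e / 2 * (u - t0))); unfold w; nra.
    - intros u Hu Hn; apply Hl; [lra|exact Hn]. }
  assert (Hinv : exp (- (e / 2) * (t - t0)) * w t = 1).
  { unfold w; rewrite <- exp_plus, <- exp_0; f_equal; ring. }
  assert (Hw0 : w t0 = 1) by (unfold w; rewrite Rminus_diag, Rmult_0_r; apply exp_0).
  unfold F in HF; rewrite Hw0, Rmult_1_l in HF.
  apply (Rmult_le_compat_l (exp (- (e / 2) * (t - t0)))) in HF; [|left; apply exp_pos].
  rewrite <- Rmult_assoc, Hinv, Rmult_1_l in HF; exact HF.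
Qed.

End Solution.

End System.

Lemma vnorm_le_of_lyap (V : vec -> R) a b r (y z : vec) : 0 < a -> 0 <= b -> 0 <= r ->
  a * sqnorm y <= V y -> V y <= r * r * V z -> V z <= b * sqnorm z ->
  vnorm y <= sqrt (b / a) * r * vnorm z.
Proof.
  intros Ha Hb Hr Hy Hyz Hz.
  assert (Hba : 0 <= b / a) by (apply Rmult_le_pos; [lra|apply Rlt_le, Rinv_0_lt_compat, Ha]).
  assert (Hsq : sqnorm y <= b / a * (r * r) * sqnorm z).
  { apply (Rmult_le_reg_l a); [exact Ha|].
    replace (a * (b / a * (r * r) * sqnorm z)) with (r * r * (b * sqnorm z)) by (field; lra).
    apply Rle_trans with (V y); [exact Hy|].
    apply Rle_trans with (r * r * V z); [exact Hyz|].
    apply Rmult_le_compat_l; [nra|exact Hz]. }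
  unfold vnorm; fold (sqnorm y) (sqnorm z).
  rewrite <- (sqrt_square r) by exact Hr.
  rewrite <- sqrt_mult_alt by exact Hba.
  rewrite <- sqrt_mult_alt by (apply Rmult_le_pos; nra).
  apply sqrt_le_1_alt, Hsq.
Qed.

Theorem mainTheorem11 (m1 m2 c1 c2 k1 k2 : R) :
  0 < m1 -> 0 < m2 -> 0 < c1 -> 0 < c2 -> 0 < k1 -> 0 < k2 ->
  GUES (mkParams m1 m2 c1 c2 k1 k2).
Proof.
  intros Hm1 Hm2 Hc1 Hc2 Hk1 Hk2.
  set (p := mkParams m1 m2 c1 c2 k1 k2).
  destruct (admissible_sys_rate_exists p) as [e [He Hrate]]; auto.
  set (lo := Rmin (Rmin k1 k2) (Rmin m1 m2)); set (hi := k1 + k2 + m1 + m2).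
  assert (Hlo : lo <= k1 /\ lo <= k2 /\ lo <= m1 /\ lo <= m2).
  { pose proof (Rmin_l (Rmin k1 k2) (Rmin m1 m2)); pose proof (Rmin_r (Rmin k1 k2) (Rmin m1 m2)).
    pose proof (Rmin_l k1 k2); pose proof (Rmin_r k1 k2);
      pose proof (Rmin_l m1 m2); pose proof (Rmin_r m1 m2).
    unfold lo; repeat split; lra. }
  assert (Hlo0 : 0 < lo) by (unfold lo; repeat apply Rmin_pos; lra).
  assert (Hbounds : forall y, lo / 2 * sqnorm y <= sys_lyap p e y <= 3 * hi / 2 * sqnorm y)
    by (intros y; apply (sys_lyap_bounds p Hm1 Hm2 Hk1 Hk2 e He Hrate); simpl; unfold hi; lra).
  exists (sqrt ((3 * hi / 2) / (lo / 2))), (e / 4).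
  split; [apply sqrt_lt_R0; unfold hi; apply Rdiv_lt_0_compat; lra|split; [lra|]].
  intros sigma Hpc t0 x Hsol t Ht.
  apply (vnorm_le_of_lyap (sys_lyap p e)); [lra|unfold hi; lra|left; apply exp_pos| | |];
    try apply Hbounds.
  rewrite <- exp_plus; replace (- (e / 4) * (t - t0) + - (e / 4) * (t - t0))
      with (- (e / 2) * (t - t0)) by field.
  apply (sys_lyap_decay p Hm1 Hm2 Hc1 Hc2 e He Hrate sigma t0 x Hpc Hsol t Ht).
Qed.
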